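(* Let $d\ge 2$ and let $P_1,\dots,P_m$ be pumpkin graphs all of degree $d$, where $P_i$ has edge length $\ell_i>0$ (lengths may differ between different $P_i$). For a permutation $\sigma$ of $\{1,\dots,m\}$, let $C_\sigma$ be the chain $P_{\sigma(1)},P_{\sigma(2)},\dots,P_{\sigma(m)}$, i.e. the graph obtained by identifying the second vertex of $P_{\sigma(i)}$ with the first vertex of $P_{\sigma(i+1)}$ for $i=1,\dots,m-1$; its two end vertices are the first vertex $a_\sigma$ of $P_{\sigma(1)}$ and the second vertex $b_\sigma$ of $P_{\sigma(m)}$. Then: (i) the spectrum of $\mathbf{L}(C_\sigma)$ with standard vertex conditions does not depend on $\sigma$; (ii) more generally, for any compact metric graphs $G$, $H$ with chosen vertices $g\in G$, $h\in H$, the graph obtained from $C_\sigma$ by identifying $a_\sigma$ with $g$ and $b_\sigma$ with $h$ has spectrum independent of $\sigma$; and likewise for any compact graph $G$ with two chosen vertices $g_1,g_2$, the graph obtained by identifying $a_\sigma$ with $g_1$ and $b_\sigma$ with $g_2$ has spectrum independent of $\sigma$. In particular each end vertex of such a chain is a hot vertex.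
   Context: A pumpkin graph of degree $d$ with edge length $\ell$ consists of two vertices joined by $d$ parallel edges, each of length $\ell$ (a loop is regarded as a pumpkin graph of degree $2$, two vertices joined by two edges). On each edge the operator is $\mathbf{L}=-\frac{d^2}{dx^2}$ with standard (Neumann–Kirchhoff) vertex conditions: continuity at each vertex and vanishing sum of outward normal derivatives. Spectra are taken with multiplicities. A vertex of a graph (within a family of isospectral graphs) is called hot if attaching (by identifying one of its vertices with the hot vertex) the same arbitrary compact graph at that vertex in each member of the family yields isospectral graphs. *)

From HB Require Import structures.
From mathcomp Require Import all_boot all_order all_algebra all_fingroup.
From mathcomp Require Import all_classical all_reals all_analysis.
Set Implicit Arguments. Unset Strict Implicit. Unset Printing Implicit Defensive.
Import Order.TTheory GRing.Theory Num.Theory.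
Local Open Scope ring_scope.

(* A finite metric graph: finite vertex and edge sets, each edge e is the
   interval [0, len e] with 0 glued to vertex [src e] and [len e] glued to
   vertex [tgt e] (loops and multiple edges allowed). *)
Record mgraph (R : realType) := MGraph {
  vert : finType;
  edge : finType;
  src : edge -> vert;
  tgt : edge -> vert;
  len : edge -> R }.

Definition wf_graph (R : realType) (K : mgraph R) : Prop :=
  forall e : edge K, 0 < len e.

(* f is an eigenfunction (possibly zero) of L = -d^2/dx^2 with standard
   (continuity + Kirchhoff) vertex conditions for eigenvalue lam.
   On each edge, f e solves -y'' = lam y (classically; we take the unique
   extension of the solution to the whole line, which determines and is
   determined by its restriction to [0, len e]). *)
Definition eigfun (R : realType) (K : mgraph R) (lam : R)
  (f : edge K -> R -> R) : Prop :=
  exists (f' : edge K -> R -> R) (phi : vert K -> R),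
    [/\ (forall e (x : R), is_derive x (1 : R) (f e) (f' e x) /\
                     is_derive x (1 : R) (f' e) (- (lam * f e x))),
        (forall e, f e 0 = phi (src e) /\ f e (len e) = phi (tgt e)) &
        (forall v, \sum_(e | src e == v) (- f' e 0)
                   + \sum_(e | tgt e == v) f' e (len e) = 0)].

Arguments eigfun {R} K lam f.

Definition mult_ge (R : realType) (K : mgraph R) (lam : R) (k : nat) : Prop :=
  exists F : 'I_k -> edge K -> R -> R,
    (forall i, eigfun K lam (F i)) /\
    (forall c : 'I_k -> R,
        (forall e x, \sum_(i < k) c i * F i e x = 0) -> forall i, c i = 0).

Arguments mult_ge {R} K lam k.

Definition isospectral (R : realType) (K1 K2 : mgraph R) : Prop :=
  forall (lam : R) (k : nat), mult_ge K1 lam k <-> mult_ge K2 lam k.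

Arguments isospectral {R} K1 K2.

Definition empty_graph (R : realType) : mgraph R :=
  @MGraph R void void (fun e => e) (fun e => e) (fun _ => 0).

Definition gsum (R : realType) (G H : mgraph R) : mgraph R :=
  @MGraph R (vert G + vert H)%type (edge G + edge H)%type
    (fun e => match e with inl e => inl (src e) | inr e => inr (src e) end)
    (fun e => match e with inl e => inl (tgt e) | inr e => inr (tgt e) end)
    (fun e => match e with inl e => len e | inr e => len e end).

(* vertex j (0 <= j <= m) of the chain of m pumpkins; vertex 0 is the end
   vertex a, vertex m is the end vertex b, vertex j (0<j<m) joins the j-th
   and (j+1)-th pumpkins. *)
Definition chain_vert (R : realType) (K : mgraph R) (oa ob : option (vert K))
  (m : nat) (j : 'I_m.+1) : (vert K + 'I_m.+1)%type :=
  if val j == 0%N then (if oa is Some g then inl g else inr j)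
  else if val j == m then (if ob is Some h then inl h else inr j)
  else inr j.

Arguments chain_vert {R K} oa ob {m} j.

(* The chain P_{s(1)}, ..., P_{s(m)} of pumpkins of degree d, where the
   i-th pumpkin has edge length l i, glued to the graph K: its end vertex
   a_s identified with oa (if Some) and b_s with ob (if Some).
   Chain edge (j,k) is the k-th parallel edge of the j-th pumpkin in the
   chain (which is P_{s j}), going from chain vertex j to chain vertex j+1. *)
Definition chain_glued (R : realType) (K : mgraph R) (oa ob : option (vert K))
  (d m : nat) (l : 'I_m -> R) (s : {perm 'I_m}) : mgraph R :=
  @MGraph R (vert K + 'I_m.+1)%type (edge K + ('I_m * 'I_d))%type
    (fun e => match e with
              | inl e => inl (src e)
              | inr jk => chain_vert oa ob (widen_ord (leqnSn m) jk.1) end)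
    (fun e => match e with
              | inl e => inl (tgt e)
              | inr jk => chain_vert oa ob (lift ord0 jk.1) end)
    (fun e => match e with
              | inl e => len e
              | inr jk => l (s jk.1) end).

Arguments chain_glued {R} K oa ob d {m} l s.
Arguments wf_graph {R} K.

From HB Require Import structures.
From mathcomp Require Import all_boot all_order all_algebra all_fingroup.
From mathcomp Require Import all_classical all_reals all_analysis.
From mathcomp Require Import ring lra.
Set Implicit Arguments. Unset Strict Implicit. Unset Printing Implicit Defensive.
Import Order.TTheory GRing.Theory Num.Theory.
Local Open Scope ring_scope.

(* Let f be an eigenfunction of -d^2/dx^2 (eigenvalue lam) on a pumpkin chain
   glued to an arbitrary graph K.  On the j-th pumpkin write f as its mean
   over the d parallel edges plus an oscillating part with zero mean.  The
   mean solves -y'' = lam y on the pumpkin, and continuity plus Kirchhoff's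
   condition at an internal chain vertex say that consecutive means glue with
   matching value and derivative; by uniqueness for the ODE all the means are
   pieces of ONE solution run along the chain (pmean_continuation).  The
   oscillating parts vanish at the vertices and carry no flux.  Hence, for
   another order t, the map [transport s t] - shift the global mean profile to
   the new pumpkin positions and carry each pumpkin's oscillating part along
   with it - sends eigenfunctions to eigenfunctions; it is linear and
   [transport t s] inverts it, so multiplicities agree. *)

Section LinearODE.
Variable R : realType.

Definition ode_sol (lam : R) (h h' : R -> R) : Prop :=
  forall x : R, is_derive x (1 : R) h (h' x) /\ is_derive x (1 : R) h' (- (lam * h x)).

Lemma deriv0_zero (f : R -> R) (x0 : R) :
  (forall x : R, is_derive x (1 : R) f 0) -> f x0 = 0 -> forall x, f x = 0.
Proof. by move=> df f0 x; rewrite (is_derive_0_is_cst x x0 df). Qed.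

(* Uniqueness for u' = c u: the product u(x) exp(-c x) is constant. *)
Lemma first_order_uniq (c : R) (u : R -> R) (x0 : R) :
  (forall x : R, is_derive x (1 : R) u (c * u x)) -> u x0 = 0 -> forall x, u x = 0.
Proof.
move=> du u0 x.
have damped : forall y, u y * expR (- (c * y)) = 0.
  apply: (deriv0_zero (f := fun y => u y * expR (- (c * y))) (x0 := x0)); last first.
    by rewrite u0 mul0r.
  move=> y; have de : is_derive y 1 (fun z => expR (- (c * z)))
                        (expR (- (c * y)) * - (c * 1)).
    exact: (is_derive1_comp (f := expR) (g := fun z => - (c * z))).
  apply: is_derive_eq (is_deriveM (du y) de) _.
  by rewrite /GRing.scale /=; ring.
by have /eqP := damped x; rewrite mulf_eq0 (gt_eqF (expR_gt0 _)) orbF => /eqP.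
Qed.

Section Uniqueness.
Variables (lam x0 : R) (h h' : R -> R).
Hypotheses (sol : ode_sol lam h h') (h0 : h x0 = 0) (h'0 : h' x0 = 0).

(* lam = -k^2 < 0: both h' + k h and h' - k h solve first-order equations. *)
Lemma ode_uniq_neg : lam < 0 -> forall x, h x = 0 /\ h' x = 0.
Proof.
move=> lam_lt0; pose k := Num.sqrt (- lam).
have kk : lam = - (k * k) by rewrite -expr2 sqr_sqrtr ?opprK // oppr_ge0 ltW.
have k_gt0 : 0 < k by rewrite sqrtr_gt0 oppr_gt0.
have rising c : c * c = k * k -> forall x, h' x + c * h x = 0.
  move=> cc; pose u y := h' y + c * h y.
  apply: (first_order_uniq (c := c) (u := u) (x0 := x0)); last first.
    by rewrite /u h0 h'0 mulr0 addr0.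
  move=> x; have [d1 d2] := sol x.
  apply: is_derive_eq (is_deriveD d2 (is_deriveZ c d1)) _.
  by rewrite /GRing.scale /= /u kk -cc; ring.
move=> x; have up := rising k erefl x.
have down := rising (- k) (mulrNN k k) x; rewrite mulNr in down.
have /eqP : (k + k) * h x = 0 by rewrite mulrDl; lra.
rewrite mulf_eq0 gt_eqF ?addr_gt0 //= => /eqP hx.
by split=> //; move: up; rewrite hx mulr0 addr0.
Qed.

(* lam > 0: the energy h'^2 + lam h^2 is conserved. *)
Lemma ode_uniq_pos : 0 < lam -> forall x, h x = 0 /\ h' x = 0.
Proof.
move=> lam_gt0.
have energy : forall x, h' x * h' x + lam * (h x * h x) = 0.
  pose E y := h' y * h' y + lam * (h y * h y).
  apply: (deriv0_zero (f := E) (x0 := x0)); last first.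
    by rewrite /E h0 h'0; ring.
  move=> x; have [d1 d2] := sol x.
  have dE := is_deriveD (is_deriveM d2 d2) (is_deriveZ lam (is_deriveM d1 d1)).
  apply: is_derive_eq dE _.
  by rewrite /GRing.scale /=; ring.
move=> x; have := energy x.
have sq1 : 0 <= h' x * h' x by rewrite -expr2 sqr_ge0.
have sq2 : 0 <= lam * (h x * h x) by rewrite mulr_ge0 ?(ltW lam_gt0) // -expr2 sqr_ge0.
move=> e; have /eqP : h' x * h' x = 0 by lra.
have /eqP : lam * (h x * h x) = 0 by lra.
by rewrite !mulf_eq0 gt_eqF //= !orbb => /eqP -> /eqP ->.
Qed.

(* lam = 0: h' is constant, hence zero, and then so is h. *)
Lemma ode_uniq_zero : lam = 0 -> forall x, h x = 0 /\ h' x = 0.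
Proof.
move=> lam0.
have dh' : forall x, h' x = 0.
  apply: (deriv0_zero (f := h') (x0 := x0)) => // x; have [_ d2] := sol x.
  by apply: is_derive_eq d2 _; rewrite lam0 mul0r oppr0.
have dh : forall x, h x = 0.
  apply: (deriv0_zero (f := h) (x0 := x0)) => // x.
  by have [d1 _] := sol x; rewrite -(dh' x).
by move=> x; rewrite dh dh'.
Qed.

Lemma ode_uniq : forall x, h x = 0 /\ h' x = 0.
Proof.
case: (ltgtP lam 0); [exact: ode_uniq_neg | exact: ode_uniq_pos | exact: ode_uniq_zero].
Qed.

End Uniqueness.

Lemma ode_solD (lam : R) (h h' g g' : R -> R) :
  ode_sol lam h h' -> ode_sol lam g g' ->
  ode_sol lam (fun y => h y + g y) (fun y => h' y + g' y).
Proof.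
move=> Hh Hg x; have [dh dh'] := Hh x; have [dg dg'] := Hg x.
by split; [exact: (is_deriveD dh dg) | apply: is_derive_eq (is_deriveD dh' dg') _; ring].
Qed.

Lemma ode_solB (lam : R) (h h' g g' : R -> R) :
  ode_sol lam h h' -> ode_sol lam g g' ->
  ode_sol lam (fun y => h y - g y) (fun y => h' y - g' y).
Proof.
move=> Hh Hg x; have [dh dh'] := Hh x; have [dg dg'] := Hg x.
by split; [exact: (is_deriveB dh dg) | apply: is_derive_eq (is_deriveB dh' dg') _; ring].
Qed.

Lemma ode_solZ (lam c : R) (h h' : R -> R) :
  ode_sol lam h h' -> ode_sol lam (fun y => c * h y) (fun y => c * h' y).
Proof.
move=> Hh x; have [dh dh'] := Hh x.
split; first exact: (is_deriveZ c dh).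
by apply: is_derive_eq (is_deriveZ c dh') _; rewrite /GRing.scale /=; ring.
Qed.

Lemma ode_sol_sum (lam : R) (N : nat) (h h' : 'I_N -> R -> R) :
  (forall i, ode_sol lam (h i) (h' i)) ->
  ode_sol lam (fun y => \sum_(i < N) h i y) (fun y => \sum_(i < N) h' i y).
Proof.
move=> Hh x.
have dsum (g g' : 'I_N -> R -> R) (dg : forall i, is_derive x 1 (g i) (g' i x)) :
    is_derive x 1 (fun y => \sum_(i < N) g i y) (\sum_(i < N) g' i x).
  have := @is_derive_sum R R^o R^o N g x 1 (fun i => g' i x) dg.
  by rewrite (_ : (\sum_(i < N) g i) = (fun y => \sum_(i < N) g i y)) //;
     apply/funext => y; rewrite fct_sumE.
split; first exact: dsum (fun i => (Hh i x).1).
apply: is_derive_eq (dsum h' (fun i y => - (lam * h i y)) (fun i => (Hh i x).2)) _.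
by rewrite sumrN mulr_sumr.
Qed.

Lemma ode_sol_shift (lam c : R) (h h' : R -> R) :
  ode_sol lam h h' -> ode_sol lam (fun y => h (y + c)) (fun y => h' (y + c)).
Proof.
move=> Hh x; have [dh dh'] := Hh (x + c).
have shifted (g : R -> R) a :
    is_derive (x + c) 1 g a -> is_derive x 1 (fun y => g (y + c)) a.
  move=> dg; have := @is_derive1_comp R g (shift c) x a 1 dg (is_derive_shift x 1 c).
  by rewrite mulr1.
by split; apply: shifted.
Qed.

End LinearODE.

Definition flux (R : realType) (G : mgraph R) (F' : edge G -> R -> R) (v : vert G) : R :=
  \sum_(e | src e == v) (- F' e 0) + \sum_(e | tgt e == v) F' e (len e).
Arguments flux {R} G F' v.

Section Chain.
Variables (R : realType) (K : mgraph R) (oa ob : option (vert K)) (d n : nat).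
Local Notation m := n.+1.
Variable l : 'I_m -> R.

Local Notation cedge := (edge K + 'I_m * 'I_d)%type.
Local Notation cvert := (vert K + 'I_m.+1)%type.

(* The chain for the order s, and its j-th vertex (0 <= j <= m), which is the
   common vertex of pumpkins j-1 and j (counted from 0). *)
Definition chain (s : {perm 'I_m}) : mgraph R := chain_glued K oa ob d l s.

Definition cvn (j : nat) : cvert := chain_vert oa ob (inord j : 'I_m.+1).

Lemma chain_src s (jk : 'I_m * 'I_d) : @src R (chain s) (inr jk) = cvn jk.1.
Proof.
rewrite /= /cvn; congr chain_vert; apply: ord_inj.
by rewrite /= inordK // ltnS ltnW.
Qed.

Lemma chain_tgt s (jk : 'I_m * 'I_d) : @tgt R (chain s) (inr jk) = cvn jk.1.+1.
Proof.
rewrite /= /cvn; congr chain_vert; apply: ord_inj.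
by rewrite /= inordK // ltnS.
Qed.

Lemma cvn_cases (j : nat) : (j <= m)%N ->
  match cvn j with inl _ => (j == 0%N) || (j == m) | inr j' => val j' == j end.
Proof.
move=> jm; rewrite /cvn /chain_vert.
have -> : val (inord j : 'I_m.+1) = j by exact: inordK.
have [->|j0] := eqVneq j 0%N; first by case: oa => [a|] //=; rewrite inordK.
have [->|jm'] := eqVneq j m; first by case: ob => [b|] //=; rewrite ?eqxx ?orbT // inordK.
by rewrite /= inordK.
Qed.

Lemma cvn_inr (i : nat) : (0 < i < m)%N -> cvn i = inr (inord i).
Proof.
case/andP=> i0 im; rewrite /cvn /chain_vert.
have -> : val (inord i : 'I_m.+1) = i by exact/inordK/ltnW.
by rewrite (gtn_eqF i0) (ltn_eqF im).
Qed.

Lemma cvn_internal_eq (i j : nat) : (0 < i < m)%N -> (j <= m)%N ->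
  (cvn j == cvn i) = (j == i).
Proof.
move=> im jm; rewrite (cvn_inr im); have := cvn_cases jm.
case: (cvn j) => [g | j'].
  have -> : (inl g == inr (inord i) :> cvert) = false by [].
  by case/andP: im => i0 im /orP[] /eqP ->; rewrite eq_sym ?(gtn_eqF i0) ?(ltn_eqF im).
have -> : (inr j' == inr (inord i) :> cvert) = (j' == inord i) by [].
move=> /eqP <-; rewrite -(inj_eq val_inj) /= inordK //.
by case/andP: im => _ /ltnW.
Qed.

Definition flux_K (F' : cedge -> R -> R) (v : cvert) : R :=
  \sum_(e : edge K | inl (src e) == v) - F' (inl e) 0
  + \sum_(e : edge K | inl (tgt e) == v) F' (inl e) (len e).

Lemma indicator_sum (b : bool) (N : nat) (X : 'I_N -> R) :
  b%:R * \sum_(k < N) X k = \sum_(k < N) (if b then X k else 0).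
Proof. by case: b; rewrite ?mul1r ?mul0r // big1. Qed.

Lemma sum_nat_delta (a : nat) (X : 'I_m -> R) : (a < m)%N ->
  \sum_(j < m) (j == a :> nat)%:R * X j = X (inord a).
Proof.
move=> am; rewrite (bigD1 (inord a)) //= inordK // eqxx mul1r big1 ?addr0 //.
move=> j /eqP jn; case: eqP => ja; last by rewrite mul0r.
by case: jn; apply: ord_inj; rewrite ja inordK.
Qed.

Lemma flux_split s (F' : cedge -> R -> R) (v : cvert) :
  flux (chain s) F' v =
  flux_K F' v + \sum_(j < m) ((cvn j == v)%:R * - (\sum_(k < d) F' (inr (j, k)) 0)
                  + (cvn j.+1 == v)%:R * \sum_(k < d) F' (inr (j, k)) (l (s j))).
Proof.
rewrite /flux !big_sumType /flux_K /= addrACA; congr (_ + _).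
rewrite big_split /=; congr (_ + _).
- rewrite big_mkcond /=; under [RHS]eq_bigr do rewrite -sumrN indicator_sum.
  rewrite pair_bigA /=; apply: eq_bigr => -[j k] _ /=.
  by rewrite -[chain_vert _ _ _]/(@src R (chain s) (inr (j, k))) chain_src.
- rewrite big_mkcond /=; under [RHS]eq_bigr do rewrite indicator_sum.
  rewrite pair_bigA /=; apply: eq_bigr => -[j k] _ /=.
  by rewrite -[chain_vert _ _ _]/(@tgt R (chain s) (inr (j, k))) chain_tgt.
Qed.

Definition offset (t : {perm 'I_m}) (j : nat) : R := \sum_(q < m | (q < j)%N) l (t q).

Lemma offset0 t : offset t 0 = 0.
Proof. by rewrite /offset big_pred0. Qed.

Lemma offsetS t (j : 'I_m) : offset t j.+1 = offset t j + l (t j).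
Proof.
rewrite /offset (bigD1 j) ?ltnSn //= addrC; congr (_ + _).
by apply: eq_bigl => q; rewrite ltnS ltn_neqAle andbC.
Qed.

Lemma offset_end t : offset t m = \sum_(i < m) l i.
Proof.
rewrite /offset (eq_bigl xpredT) => [|q]; last by rewrite /= ltn_ord.
by rewrite [RHS](reindex_inj (@perm_inj _ t)).
Qed.

(* If the total derivative on pumpkin j is d g evaluated at the position along
   the chain, the pumpkin part of the flux telescopes and only the ends remain,
   independently of the order u. *)
Lemma flux_telescope (u : {perm 'I_m}) (g : R -> R) (v : cvert) :
  \sum_(j < m) ((cvn j == v)%:R * - (d%:R * g (0 + offset u j))
     + (cvn j.+1 == v)%:R * (d%:R * g (l (u j) + offset u j)))
  = (cvn m == v)%:R * (d%:R * g (\sum_(i < m) l i)) - (cvn 0 == v)%:R * (d%:R * g 0).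
Proof.
pose a k := (cvn k == v)%:R * (d%:R * g (offset u k)).
rewrite (eq_bigr (fun j : 'I_m => a j.+1 - a j)) => [|j _]; last first.
  rewrite /a offsetS add0r (addrC (offset u j)) mulrN; exact: addrC.
rewrite -(big_mkord xpredT (fun j => a j.+1 - a j)) telescope_sumr //.
by rewrite /a offset_end offset0.
Qed.

(* From now on the pumpkins have at least one edge, so means make sense. *)
Hypothesis d_gt0 : (0 < d)%N.

Definition pmean (F : cedge -> R -> R) (p : nat) (x : R) : R :=
  d%:R^-1 * \sum_(k < d) F (inr (inord p, k)) x.

Lemma natr_d_neq0 : (d%:R : R) != 0.
Proof. by rewrite pnatr_eq0 -lt0n. Qed.

Lemma sum_pmean F (q : 'I_m) y : \sum_(k < d) F (inr (q, k)) y = d%:R * pmean F q y.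
Proof. by rewrite /pmean inord_val mulrA divff ?mul1r // natr_d_neq0. Qed.

Lemma pmean_cst F p y c : (forall k, F (inr (inord p, k)) y = c) -> pmean F p y = c.
Proof.
move=> H; rewrite /pmean (eq_bigr (fun _ => c)) // sumr_const card_ord.
by rewrite -[c *+ _]mulr_natl mulKf // natr_d_neq0.
Qed.

Lemma pmean_ode lam (F F' : cedge -> R -> R) (p : nat) :
  (forall e, ode_sol lam (F e) (F' e)) -> ode_sol lam (pmean F p) (pmean F' p).
Proof. by move=> HF; apply: ode_solZ; apply: ode_sol_sum => k; exact: HF. Qed.

(* Pumpkin p of chain t is
   P_(t p), i.e. pumpkin q = s^-1 (t p) of chain s: keep its oscillating part
   and replace its mean by the global mean profile at the new position. *)
Definition transport (s t : {perm 'I_m}) (F : cedge -> R -> R) : cedge -> R -> R :=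
  fun e => match e with
  | inl e0 => F (inl e0)
  | inr pk => fun x => pmean F 0 (x + offset t pk.1)
       + (F (inr ((s^-1)%g (t pk.1), pk.2)) x - pmean F ((s^-1)%g (t pk.1)) x)
  end.

Lemma pmean_transport s t F (p : 'I_m) y :
  pmean (transport s t F) p y = pmean F 0 (y + offset t p).
Proof.
rewrite {1}/pmean /= inord_val big_split /= sumrB sum_pmean !sumr_const !card_ord.
rewrite -[pmean F 0 _ *+ _]mulr_natl -[pmean F _ y *+ _]mulr_natl subrr addr0.
by rewrite mulKf // natr_d_neq0.
Qed.

Lemma sum_transport s t F (p : 'I_m) y :
  \sum_(k < d) transport s t F (inr (p, k)) y = d%:R * pmean F 0 (y + offset t p).
Proof. by rewrite sum_pmean pmean_transport. Qed.

Lemma pmean_lin N (c : 'I_N -> R) (H : 'I_N -> cedge -> R -> R) p y :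
  pmean (fun e y => \sum_(i < N) c i * H i e y) p y = \sum_(i < N) c i * pmean (H i) p y.
Proof.
rewrite /pmean exchange_big mulr_sumr; apply: eq_bigr => i _.
by rewrite -mulr_sumr mulrCA.
Qed.

Lemma transport_lin N (c : 'I_N -> R) (H : 'I_N -> cedge -> R -> R) s t e x :
  \sum_(i < N) c i * transport s t (H i) e x
  = transport s t (fun e y => \sum_(i < N) c i * H i e y) e x.
Proof.
case: e => [e0|[p k]] //=.
under eq_bigr => i _ do rewrite mulrDr mulrBr.
by rewrite big_split sumrB /= !pmean_lin.
Qed.

Lemma transport0 s t e x : transport s t (fun _ _ => 0) e x = 0.
Proof. by case: e => [e0|[p k]] //=; rewrite /pmean !big1 // mulr0 subrr addr0. Qed.

Section Eigenfunction.
Variables (s : {perm 'I_m}) (lam : R) (f f' : cedge -> R -> R) (phi : cvert -> R).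
Hypothesis f_ode : forall e, ode_sol lam (f e) (f' e).
Hypothesis f_vert : forall e : edge (chain s),
  f e 0 = phi (src e) /\ f e (len e) = phi (tgt e).
Hypothesis f_flux : forall v : vert (chain s), flux (chain s) f' v = 0.

Lemma chain_edge_values (q : 'I_m) (k : 'I_d) :
  f (inr (q, k)) 0 = phi (cvn q) /\ f (inr (q, k)) (l (s q)) = phi (cvn q.+1).
Proof. by have [-> ->] := f_vert (inr (q, k)); rewrite chain_src chain_tgt. Qed.

Lemma pmean_src p : (p < m)%N -> pmean f p 0 = phi (cvn p).
Proof.
move=> pm; apply: pmean_cst => k.
by rewrite (chain_edge_values (inord p) k).1 inordK.
Qed.

Lemma pmean_tgt p : (p < m)%N -> pmean f p (l (s (inord p))) = phi (cvn p.+1).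
Proof.
move=> pm; apply: pmean_cst => k.
by rewrite (chain_edge_values (inord p) k).2 inordK.
Qed.

(* Kirchhoff at the internal vertex p+1: the mean derivatives match. *)
Lemma pmean_flux p : (p.+1 < m)%N -> pmean f' p.+1 0 = pmean f' p (l (s (inord p))).
Proof.
move=> pm; have := f_flux (cvn p.+1); rewrite flux_split.
rewrite (_ : flux_K f' (cvn p.+1) = 0) ?add0r; last first.
  by rewrite /flux_K (cvn_inr (i := p.+1) pm) !big_pred0 ?addr0.
under eq_bigr => j _ do rewrite (cvn_internal_eq (i := p.+1) pm (ltnW (ltn_ord j)))
                           (cvn_internal_eq (i := p.+1) pm (ltn_ord j)) eqSS.
rewrite big_split /= (sum_nat_delta (fun j => - \sum_(k < d) f' (inr (j, k)) 0) pm).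
rewrite (sum_nat_delta (fun j => \sum_(k < d) f' (inr (j, k)) (l (s j))) (ltnW pm)).
by move=> balance; rewrite /pmean; congr (_ * _); lra.
Qed.

(* Key lemma: all pumpkin means are restrictions of the single solution
   pmean f 0 on the whole chain, by induction and ODE uniqueness. *)
Lemma pmean_continuation p : (p < m)%N -> forall x,
  pmean f p x = pmean f 0 (x + offset s p) /\ pmean f' p x = pmean f' 0 (x + offset s p).
Proof.
elim: p => [|p IH] pm x; first by rewrite offset0 addr0.
have pm' : (p < m)%N := ltnW pm.
pose c := l (s (inord p)).
have val0 : pmean f p.+1 0 - pmean f p (0 + c) = 0.
  by rewrite add0r (pmean_src pm) (pmean_tgt pm') subrr.
have der0 : pmean f' p.+1 0 - pmean f' p (0 + c) = 0.
  by rewrite add0r (pmean_flux pm) subrr.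
have sol := ode_solB (pmean_ode p.+1 f_ode) (ode_sol_shift c (pmean_ode p f_ode)).
have [glue glue'] := ode_uniq (x0 := 0) sol val0 der0 x.
have offS : offset s p.+1 = offset s p + c.
  by rewrite -{1}(inordK pm') offsetS inordK.
have [IHf IHf'] := IH pm' (x + c).
by rewrite (subr0_eq glue) (subr0_eq glue') IHf IHf' offS -!addrA (addrC c).
Qed.

Lemma vertex_value j : (j <= m)%N -> phi (cvn j) = pmean f 0 (offset s j).
Proof.
rewrite leq_eqVlt => /orP [/eqP -> | jm]; last first.
  by rewrite -(pmean_src jm) (pmean_continuation jm 0).1 add0r.
rewrite -(pmean_tgt (ltnSn n)) (pmean_continuation (ltnSn n) _).1.
by have := offsetS s (inord n); rewrite inordK // => ->; rewrite addrC.
Qed.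

Definition transport_phi (t : {perm 'I_m}) (v : cvert) : R :=
  match v with inl g => phi (inl g) | inr j => pmean f 0 (offset t j) end.

Lemma transport_phi_cvn t j : (j <= m)%N ->
  transport_phi t (cvn j) = pmean f 0 (offset t j).
Proof.
move=> jm; have := cvn_cases jm; case Hc: (cvn j) => [g|j'] /=; last by move=> /eqP ->.
by rewrite -Hc (vertex_value jm) => /orP[] /eqP ->; rewrite ?offset0 ?offset_end.
Qed.

Lemma transport_ode t e : ode_sol lam (transport s t f e) (transport s t f' e).
Proof.
case: e => [e0 | [p k]]; first exact: f_ode.
exact: ode_solD (ode_sol_shift _ (pmean_ode 0 f_ode))
                (ode_solB (f_ode (inr (_, k))) (pmean_ode _ f_ode)).
Qed.

Lemma transport_vert t (e : edge (chain t)) :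
  transport s t f e 0 = transport_phi t (src e) /\
  transport s t f e (len e) = transport_phi t (tgt e).
Proof.
case: e => [e0 | [p k]]; first exact: f_vert (inl e0).
set q := (s^-1)%g (t p); have [at_src at_tgt] := chain_edge_values q k.
have lq : l (t p) = l (s q) by rewrite permKV.
split.
- rewrite chain_src transport_phi_cvn ?(ltnW (ltn_ord p)) //= -/q.
  by rewrite at_src (pmean_src (ltn_ord q)) subrr addr0 add0r.
- rewrite chain_tgt transport_phi_cvn ?(ltn_ord p) //= -/q lq at_tgt.
  have := pmean_tgt (ltn_ord q); rewrite inord_val => ->.
  by rewrite subrr addr0 -lq addrC -offsetS.
Qed.

(* ... and satisfies Kirchhoff's condition, as the flux telescopes the same
   way for s and for t. *)
Lemma transport_flux t v : flux (chain t) (transport s t f') v = 0.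
Proof.
rewrite flux_split (_ : flux_K (transport s t f') v = flux_K f' v) //.
under eq_bigr => j _ do rewrite !sum_transport.
rewrite flux_telescope; have := f_flux v; rewrite flux_split.
under eq_bigr => j _ do rewrite !sum_pmean !(pmean_continuation (ltn_ord j) _).2.
by rewrite flux_telescope.
Qed.

Lemma transport_inv t e x : transport t s (transport s t f) e x = f e x.
Proof.
case: e => [e0|[p k]] //=.
rewrite (pmean_transport s t f ord0) pmean_transport /= offset0 addr0 permKV permK.
by rewrite (pmean_continuation (ltn_ord p) x).1; ring.
Qed.

End Eigenfunction.

Lemma transport_eigfun s t lam f :
  eigfun (chain s) lam f -> eigfun (chain t) lam (transport s t f).
Proof.
case=> f' [phi [f_ode f_vert f_flux]].
have f_sol : forall e, ode_sol lam (f e) (f' e) := f_ode.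
exists (transport s t f'), (transport_phi f phi t); split.
- by move=> e; apply: (transport_ode s f_sol t e).
- exact: (transport_vert f_sol f_vert f_flux (t := t)).
- by move=> v; have := transport_flux f_sol f_vert f_flux (t := t) v.
Qed.

Lemma eigfun_transportK s t lam f :
  eigfun (chain s) lam f -> forall e x, transport t s (transport s t f) e x = f e x.
Proof.
case=> f' [phi [f_ode f_vert f_flux]] e x.
exact: (transport_inv (lam := lam) (f' := f') f_ode f_vert f_flux t e x).
Qed.

Lemma mult_transport s t lam k : mult_ge (chain s) lam k -> mult_ge (chain t) lam k.
Proof.
case=> F [F_eig F_indep]; exists (fun i => transport s t (F i)); split.
  by move=> i; apply: transport_eigfun.
move=> c vanish; apply: F_indep => e x.
rewrite (eq_bigr (fun i => c i * transport t s (transport s t (F i)) e x)); last first.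
  by move=> i _; rewrite (eigfun_transportK t (F_eig i)).
rewrite transport_lin (_ : (fun e y => _) = (fun _ _ => 0)) ?transport0 //.
by apply/funext => e'; apply/funext => y; exact: vanish.
Qed.

Lemma chain_isospectral s t : isospectral (chain s) (chain t).
Proof. by move=> lam k; split; apply: mult_transport. Qed.

End Chain.

Lemma chain_glued_isospectral (R : realType) (K : mgraph R) (oa ob : option (vert K))
    (d m : nat) (l : 'I_m -> R) :
  (0 < d)%N -> (0 < m)%N -> forall s t : {perm 'I_m},
  isospectral (chain_glued K oa ob d l s) (chain_glued K oa ob d l t).
Proof. by move=> d_gt0; case: m l => [//|n] l _ s t; exact: chain_isospectral. Qed.

Theorem theorem2 (R : realType) (d m : nat) (l : 'I_m -> R) :
  (2 <= d)%N -> (0 < m)%N -> (forall i, 0 < l i) ->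
  [/\ (* (i) the bare chains are isospectral *)
      (forall s t : {perm 'I_m},
         isospectral (chain_glued (empty_graph R) None None d l s)
                     (chain_glued (empty_graph R) None None d l t)),
      (* (ii) a_s glued to g in G, b_s glued to h in H *)
      (forall (G H : mgraph R) (g : vert G) (h : vert H),
         wf_graph G -> wf_graph H ->
         forall s t : {perm 'I_m},
           isospectral
             (chain_glued (gsum G H) (Some (inl g)) (Some (inr h)) d l s)
             (chain_glued (gsum G H) (Some (inl g)) (Some (inr h)) d l t)),
      (* (ii') a_s glued to g1, b_s glued to g2, both in G *)
      (forall (G : mgraph R) (g1 g2 : vert G), wf_graph G ->
         forall s t : {perm 'I_m},
           isospectral (chain_glued G (Some g1) (Some g2) d l s)
                       (chain_glued G (Some g1) (Some g2) d l t)) &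
      (* hot vertices: attaching G at a_s alone, or at b_s alone *)
      (forall (G : mgraph R) (g : vert G), wf_graph G ->
         forall s t : {perm 'I_m},
           isospectral (chain_glued G (Some g) None d l s)
                       (chain_glued G (Some g) None d l t) /\
           isospectral (chain_glued G None (Some g) d l s)
                       (chain_glued G None (Some g) d l t))].
Proof.
move=> d_ge2 m_gt0 _; have d_gt0 : (0 < d)%N by case: d d_ge2.
split.
- by move=> s t; exact: chain_glued_isospectral.
- by move=> G H g h _ _ s t; exact: chain_glued_isospectral.
- by move=> G g1 g2 _ s t; exact: chain_glued_isospectral.
- by move=> G g _ s t; split; exact: chain_glued_isospectral.
Qed.
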